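(* Let $n\ge1$ and consider nonempty compact subsets of $\mathbb{R}^n$ (''regions'') whose complement is nonempty. For a region $R$ and $\mathbf{x}\in\mathbb{R}^n$ let $d(R,\mathbf{x})=\inf\{\|\mathbf{x}-\mathbf{y}\|_2:\mathbf{y}\in R\}$, and similarly $d(R^c,\mathbf{x})$ for the complement $R^c=\mathbb{R}^n\setminus R$. Define the boundary dissimilarity $$d_{\mathrm{bd}}(R_1,R_2)=\begin{cases}-\min_{\mathbf{x}_2\in R_2} d(R_1^c,\mathbf{x}_2) & \text{if } R_2\subseteq R_1,\\ \sup_{\mathbf{x}_2\in R_2\setminus R_1} d(R_1,\mathbf{x}_2) & \text{otherwise.}\end{cases}$$ Then: (1) $d_{\mathrm{bd}}(R_1,R_2)\le 0$ if and only if $R_2\subseteq R_1$. Moreover, $d_{\mathrm{bd}}(R_1,R_2)=0$ if and only if $R_2$ is internally tangent to $R_1$, that is, $R_2\subseteq R_1$ and the boundaries $\partial R_1$ and $\partial R_2$ have a common point. (2) If $R_3\subseteq R_2\subseteq R_1$, then $d_{\mathrm{bd}}(R_1,R_3)\le d_{\mathrm{bd}}(R_1,R_2)$. *)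

From HB Require Import structures.
From mathcomp Require Import all_boot all_order all_algebra.
From mathcomp Require Import all_classical all_reals all_analysis.
Set Implicit Arguments. Unset Strict Implicit. Unset Printing Implicit Defensive.
Import Order.TTheory GRing.Theory Num.Theory.
Import numFieldNormedType.Exports.
Local Open Scope classical_set_scope.
Local Open Scope ring_scope.

Definition norm2 (R : realType) (n : nat) (x : 'rV[R]_n) : R :=
  Num.sqrt (\sum_(i < n) (x ord0 i) ^+ 2).

Definition region (R : realType) (n : nat) (A : set 'rV[R]_n) : Prop :=
  compact A /\ A !=set0 /\ (~` A) !=set0.

Definition dist_set (R : realType) (n : nat) (A : set 'rV[R]_n) (x : 'rV[R]_n) : R :=
  inf [set norm2 (x - y) | y in A].

Definition boundary (R : realType) (n : nat) (A : set 'rV[R]_n) : set 'rV[R]_n :=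
  closure A `\` interior A.

(* boundary dissimilarity; the "min" of the first case is written as an inf
   (it is attained since R2 is compact and d(R1^c, .) is continuous) *)
Definition dbd (R : realType) (n : nat) (R1 R2 : set 'rV[R]_n) : R :=
  if `[< R2 `<=` R1 >] then
    - inf [set dist_set (~` R1) x2 | x2 in R2]
  else
    sup [set dist_set R1 x2 | x2 in R2 `\` R1].

Definition internally_tangent (R : realType) (n : nat) (R1 R2 : set 'rV[R]_n) : Prop :=
  R2 `<=` R1 /\ (boundary R1 `&` boundary R2) !=set0.

From HB Require Import structures.
From mathcomp Require Import all_boot all_order all_algebra.
From mathcomp Require Import all_classical all_reals all_analysis.
Set Implicit Arguments. Unset Strict Implicit. Unset Printing Implicit Defensive.
Import Order.TTheory GRing.Theory Num.Theory.
Import numFieldNormedType.Exports.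
Local Open Scope classical_set_scope.
Local Open Scope ring_scope.

(* The Euclidean distance [dist_set] to a set is compared with the distance
   [dist_to] for the library norm of ['rV[R]_n] (the max norm), which is
   1-Lipschitz, hence continuous.  The two lie within a factor [sqrt n] of each
   other, so both vanish exactly on the closure of the set.
   If [R2] is not inside [R1], a point of [R2 \ R1] is at positive distance from
   the closed set [R1], so [dbd R1 R2 > 0].  If [R2] is inside [R1], [dbd R1 R2]
   is minus the infimum over [R2] of the distance to the complement of [R1].
   This infimum vanishes iff a minimiser on the compact [R2] of the continuous
   max-norm distance lies in the closure of that complement, i.e. outside the
   interior of [R1], i.e. on both boundaries.  Shrinking [R2] can only raise the
   infimum, which gives monotonicity. *)

Section distance_to_set.
Variables (R : realType) (V : normedModType R).
Implicit Types (A : set V) (x y z : V).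

Definition dist_to A x := inf [set `|x - y| | y in A].

Lemma dist_to_set0 x : dist_to set0 x = 0.
Proof. by rewrite /dist_to image_set0 inf0. Qed.

Lemma dist_to_le A x y : A y -> dist_to A x <= `|x - y|.
Proof. by move=> Ay; apply: ge_inf; [exists 0 => _ [z _ <-] | exists y]. Qed.

Lemma dist_to_ge0 A x : 0 <= dist_to A x.
Proof.
have [->|/set0P[y Ay]] := eqVneq A set0; first by rewrite dist_to_set0.
by apply: lb_le_inf => [|_ [z _ <-] //]; exists `|x - y|, y.
Qed.

Lemma dist_to_lipschitz A x z : dist_to A x <= `|x - z| + dist_to A z.
Proof.
have [->|/set0P[y0 Ay0]] := eqVneq A set0; first by rewrite !dist_to_set0 addr0.
rewrite -lerBlDl; apply: lb_le_inf => [|_ [y Ay <-]].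
  by exists `|z - y0|, y0.
rewrite lerBlDl (le_trans (dist_to_le x Ay)) // -[x - y](subrKA z).
exact: ler_normD.
Qed.

Lemma continuous_dist_to A : continuous (dist_to A).
Proof.
move=> x; apply/(@cvgrPdist_lt _ R^o) => e e0; near=> z.
rewrite (le_lt_trans _ (_ : `|x - z| < e)); last first.
  by near: z; apply: cvgr_dist_lt.
rewrite ler_distl lerBlDl (addrC (dist_to A z)) {1}(distrC x).
by rewrite !dist_to_lipschitz.
Unshelve. all: by end_near.
Qed.

Lemma dist_to_eq0P A x : A !=set0 -> dist_to A x = 0 <-> closure A x.
Proof.
move=> A0; split=> [dAx0 B /nbhs_ballP[e e0 xeB] | clAx].
  have [_ [y Ay <-] xye] : exists2 r, [set `|x - y| | y in A] r & r < e.
    apply: inf_lt; last by rewrite -/(dist_to A x) dAx0.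
    by case: A0 => y Ay; exists `|x - y|, y.
  by exists y; split => //; apply: xeB; rewrite -ball_normE.
apply/eqP; rewrite eq_le dist_to_ge0 andbT; apply/ler_addgt0Pr => e e0.
have [y [Ay xey]] := clAx _ (nbhsx_ballx x _ e0).
rewrite add0r (le_trans (dist_to_le x Ay)) // ltW //.
by move: xey; rewrite -ball_normE.
Qed.

End distance_to_set.

Section euclidean_distance.
Variables (R : realType) (n : nat).
Implicit Types (A : set 'rV[R]_n) (v x y : 'rV[R]_n).

Lemma norm2_ge0 v : 0 <= norm2 v.
Proof. exact: sqrtr_ge0. Qed.

Lemma mx_norm_le_norm2 v : `|v| <= norm2 v.
Proof.
rewrite [`|v|]mx_normrE; apply: bigmax_le => [|[i j] _ /=].
  exact: norm2_ge0.
have sq_ge0 k : 0 <= v ord0 k ^+ 2 by exact: sqr_ge0.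
rewrite (ord1 i) /norm2 -sqrtr_sqr ler_sqrt; last exact: sumr_ge0.
by rewrite (bigD1 j) //= lerDl sumr_ge0.
Qed.

Lemma norm2_le_mx_norm v : norm2 v <= Num.sqrt n%:R * `|v|.
Proof.
have entry_le j : `|v ord0 j| <= `|v|.
  rewrite [`|v|]mx_normrE.
  exact: (le_bigmax _ (fun ij : 'I_1 * 'I_n => `|v ij.1 ij.2|) (ord0, j)).
rewrite /norm2 -[`|v|]normr_id -sqrtr_sqr -sqrtrM // ler_sqrt ?mulr_ge0 //.
apply: (@le_trans _ _ (\sum_(j < n) `|v| ^+ 2)).
  apply: ler_sum => j _; rewrite -real_normK ?num_real //.
  by rewrite lerXn2r ?nnegrE.
by rewrite sumr_const card_ord mulr_natl.
Qed.

Lemma dist_set_set0 x : dist_set set0 x = 0.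
Proof. by rewrite /dist_set image_set0 inf0. Qed.

Lemma dist_set_le A x y : A y -> dist_set A x <= norm2 (x - y).
Proof.
move=> Ay; apply: ge_inf; last by exists y.
by exists 0 => _ [z _ <-]; exact: norm2_ge0.
Qed.

Lemma dist_set_ge0 A x : 0 <= dist_set A x.
Proof.
have [->|/set0P[y Ay]] := eqVneq A set0; first by rewrite dist_set_set0.
apply: lb_le_inf => [|_ [z _ <-]]; last exact: norm2_ge0.
by exists (norm2 (x - y)), y.
Qed.

Lemma dist_to_le_dist_set A x : dist_to A x <= dist_set A x.
Proof.
have [->|/set0P[y Ay]] := eqVneq A set0.
  by rewrite dist_to_set0 dist_set_set0.
apply: lb_le_inf => [|_ [z Az <-]]; first by exists (norm2 (x - y)), y.
exact: le_trans (dist_to_le x Az) (mx_norm_le_norm2 _).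
Qed.

Lemma dist_set_le_dist_to A x : dist_set A x <= Num.sqrt n%:R * dist_to A x.
Proof.
have [->|/set0P[y Ay]] := eqVneq A set0.
  by rewrite dist_to_set0 dist_set_set0 mulr0.
have dist_set_le_mx z : A z -> dist_set A x <= Num.sqrt n%:R * `|x - z|.
  by move=> Az; exact: le_trans (dist_set_le x Az) (norm2_le_mx_norm _).
have [c_gt0|c_le0] := ltP 0 (Num.sqrt (n%:R : R)).
  rewrite -ler_pdivrMl //; apply: lb_le_inf => [|_ [z Az <-]].
    by exists `|x - y|, y.
  by rewrite ler_pdivrMl // dist_set_le_mx.
have c0 : Num.sqrt n%:R = 0 :> R by apply/eqP; rewrite eq_le c_le0 sqrtr_ge0.
by have := dist_set_le_mx y Ay; rewrite c0 !mul0r.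
Qed.

Lemma dist_set_eq0P A x : A !=set0 -> dist_set A x = 0 <-> closure A x.
Proof.
move=> A0; rewrite -dist_to_eq0P //; split=> d0; apply/eqP.
  by rewrite eq_le dist_to_ge0 andbT -d0 dist_to_le_dist_set.
rewrite eq_le dist_set_ge0 andbT (le_trans (dist_set_le_dist_to A x)) //.
by rewrite d0 mulr0.
Qed.

Lemma dist_set_gt0 A x : closed A -> A !=set0 -> ~ A x -> 0 < dist_set A x.
Proof.
move=> cA A0 nAx; rewrite lt_neqAle dist_set_ge0 andbT eq_sym; apply/eqP.
by rewrite dist_set_eq0P // -(closure_id A).1.
Qed.

Lemma dist_setC_eq0P A x : ~` A !=set0 -> dist_set (~` A) x = 0 <-> ~ A° x.
Proof. by move=> cA0; rewrite dist_set_eq0P // closure_setC. Qed.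

End euclidean_distance.

Section boundary_dissimilarity.
Variables (R : realType) (n : nat).

Lemma region_closed (A : set 'rV[R]_n) : region A -> closed A.
Proof. by case=> cA _; apply: compact_closed => //; exact: norm_hausdorff. Qed.

Definition clearance (R1 R2 : set 'rV[R]_n) : R :=
  inf [set dist_set (~` R1) x | x in R2].

Lemma clearance_ge0 (R1 R2 : set 'rV[R]_n) : 0 <= clearance R1 R2.
Proof.
have [->|/set0P[x R2x]] := eqVneq R2 set0.
  by rewrite /clearance image_set0 inf0.
apply: lb_le_inf => [|_ [y _ <-]]; last exact: dist_set_ge0.
by exists (dist_set (~` R1) x), x.
Qed.

Lemma clearance_le (R1 R2 : set 'rV[R]_n) x :
  R2 x -> clearance R1 R2 <= dist_set (~` R1) x.
Proof.
move=> R2x; apply: ge_inf; last by exists x.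
by exists 0 => _ [y _ <-]; exact: dist_set_ge0.
Qed.

Lemma le_clearance (R1 R2 R3 : set 'rV[R]_n) :
  R3 `<=` R2 -> R3 !=set0 -> clearance R1 R2 <= clearance R1 R3.
Proof.
move=> R32 [x R3x]; apply: lb_le_inf => [|_ [y R3y <-]].
  by exists (dist_set (~` R1) x), x.
exact/clearance_le/R32.
Qed.

Lemma clearance_eq0P (R1 R2 : set 'rV[R]_n) :
  ~` R1 !=set0 -> R2 !=set0 -> compact R2 ->
  clearance R1 R2 = 0 <-> exists2 p, R2 p & ~ R1° p.
Proof.
move=> cR10 R20 cR2; split=> [cl0 | [p R2p nR1p]]; last first.
  apply/eqP; rewrite eq_le clearance_ge0 andbT.
  by rewrite -(dist_setC_eq0P p cR10).2 // clearance_le.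
have [p /[!inE] R2p pmin] :=
  EVT_min_rV R20 cR2 (continuous_subspaceT (@continuous_dist_to _ _ (~` R1))).
exists p => //; suff : closure (~` R1) p by rewrite closure_setC.
apply/dist_to_eq0P => //; apply/eqP.
rewrite eq_le dist_to_ge0 andbT -cl0; apply: lb_le_inf => [|_ [x R2x <-]].
  by case: R20 => x R2x; exists (dist_set (~` R1) x), x.
by rewrite (le_trans (pmin x _)) ?inE // dist_to_le_dist_set.
Qed.

Lemma dbd_sub (R1 R2 : set 'rV[R]_n) :
  R2 `<=` R1 -> dbd R1 R2 = - clearance R1 R2.
Proof. by move=> R21; rewrite /dbd asboolT. Qed.

Lemma dbd_le0 (R1 R2 : set 'rV[R]_n) : R2 `<=` R1 -> dbd R1 R2 <= 0.
Proof. by move=> R21; rewrite dbd_sub // oppr_le0 clearance_ge0. Qed.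

Lemma dbd_gt0 (R1 R2 : set 'rV[R]_n) :
  closed R1 -> R1 !=set0 -> compact R2 -> ~ R2 `<=` R1 -> 0 < dbd R1 R2.
Proof.
move=> cR1 R10 cR2 nR21; rewrite /dbd asboolF //.
have [y R1y] := R10.
have [x [R2x nR1x]] : exists x, R2 x /\ ~ R1 x.
  by move/existsNP: nR21 => [x /not_implyP]; exists x.
apply: (lt_le_trans (dist_set_gt0 cR1 R10 nR1x)).
apply: ub_le_sup; last by exists x.
have [M [Mreal MR2]] := compact_bounded cR2.
exists (Num.sqrt n%:R * ((`|M| + 1) + `|y|)) => _ [z [R2z _] <-].
apply: le_trans (dist_set_le z R1y) (le_trans (norm2_le_mx_norm _) _).
rewrite ler_wpM2l ?sqrtr_ge0 // (le_trans (ler_normB _ _)) // lerD2r.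
by apply: MR2 => //; rewrite (le_lt_trans (real_ler_norm Mreal)) // ltrDl.
Qed.

Lemma internally_tangentP (R1 R2 : set 'rV[R]_n) : R2 `<=` R1 -> closed R2 ->
  internally_tangent R1 R2 <-> exists2 p, R2 p & ~ R1° p.
Proof.
move=> R21 cR2; split=> [[_ [p [[_ nR1p] [clR2p _]]]] | [p R2p nR1p]].
  by exists p => //; rewrite (closure_id R2).1.
split=> //; exists p; split; split.
- exact/subset_closure/R21.
- exact: nR1p.
- exact: subset_closure.
- by move/(interiorS R21).
Qed.

End boundary_dissimilarity.

Theorem proposition3 (R : realType) (n : nat) (hn : (1 <= n)%N) :
  (forall R1 R2 : set 'rV[R]_n, region R1 -> region R2 ->
     (dbd R1 R2 <= 0 <-> R2 `<=` R1) /\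
     (dbd R1 R2 = 0 <-> internally_tangent R1 R2)) /\
  (forall R1 R2 R3 : set 'rV[R]_n, region R1 -> region R2 -> region R3 ->
     R3 `<=` R2 -> R2 `<=` R1 -> dbd R1 R3 <= dbd R1 R2).
Proof.
split=> [R1 R2 r1 r2 | R1 R2 R3 _ _ [_ [R3_0 _]] R32 R21]; last first.
  have R31 : R3 `<=` R1 by exact: subset_trans R21.
  by rewrite !dbd_sub // lerN2 le_clearance.
have [[_ [R1_0 cR1_0]] [cR2 [R2_0 _]]] := (r1, r2).
have tangentP R21 := @internally_tangentP _ _ R1 R2 R21 (region_closed r2).
have clearanceP := clearance_eq0P cR1_0 R2_0 cR2.
have dbd_pos : ~ R2 `<=` R1 -> 0 < dbd R1 R2 :=
  dbd_gt0 (region_closed r1) R1_0 cR2.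
split; split.
- by move=> dbd_le; apply: contrapT => /dbd_pos; rewrite ltNge dbd_le.
- exact: dbd_le0.
- move=> dbd0; have R21 : R2 `<=` R1.
    by apply: contrapT => /dbd_pos; rewrite dbd0 ltxx.
  apply/tangentP/clearanceP => //; apply/oppr_inj.
  by rewrite -dbd_sub // oppr0.
- move=> [R21 touch]; rewrite dbd_sub // clearanceP.2 ?oppr0 //.
  exact/(tangentP R21).
Qed.
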